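(* Let $C\subseteq\mathbb{F}_q^n$ be a constant weight linear code of dimension $k$, and let $0\leqslant i\leqslant k$. Then \[ N_i=\{\mathrm{Supp}(C') : C' \text{ is a subcode of } C \text{ of dimension } i\}. \]
   Context: A subcode is a linear subspace; $\mathrm{Supp}(D)=\{x: \exists d\in D,\ d_x\neq0\}$. A constant weight code is a linear code all of whose non-zero codewords have the same number of non-zero coordinates. Let $H_C$ be a parity check matrix of $C$ ($c\in C$ iff $cH_C^t=0$); the associated matroid has ground set $E=\{1,\dots,n\}$ and independent sets the subsets indexing linearly independent columns of $H_C$; $\mathrm{rank}(\sigma)$ is the maximal size of an independent subset of $\sigma$. $N_i$ denotes the set of inclusion-minimal subsets $\sigma\subseteq E$ with $\#\sigma-\mathrm{rank}(\sigma)=i$. *)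

From HB Require Import structures.
From mathcomp Require Import all_boot all_order all_algebra all_field.
Set Implicit Arguments. Unset Strict Implicit. Unset Printing Implicit Defensive.
Import GRing.Theory.
Local Open Scope ring_scope.

Section Codes.
Variables (F : finFieldType) (n : nat).

Definition wt (c : 'rV[F]_n) : nat := #|[set x : 'I_n | c 0 x != 0]|.

(* Linear codes / subcodes are row spaces of matrices (mxalgebra). *)
Definition constant_weight (C : 'M[F]_n) : Prop :=
  forall c1 c2 : 'rV[F]_n, (c1 <= C)%MS -> (c2 <= C)%MS ->
    c1 != 0 -> c2 != 0 -> wt c1 = wt c2.

Definition Supp (D : 'M[F]_n) : {set 'I_n} :=
  [set x : 'I_n | [exists d : 'rV[F]_n, (d <= D)%MS && (d 0 x != 0)]].

Definition parity_check (m : nat) (H : 'M[F]_(m, n)) (C : 'M[F]_n) : Prop :=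
  forall c : 'rV[F]_n, (c <= C)%MS = (c *m H^T == 0).

Definition col_indep (m : nat) (H : 'M[F]_(m, n)) (tau : {set 'I_n}) : bool :=
  [forall a : 'rV[F]_n,
     [forall j : 'I_n, (j \notin tau) ==> (a 0 j == 0)] ==>
     (H *m a^T == 0) ==> (a == 0)].

Definition mrank (m : nat) (H : 'M[F]_(m, n)) (sigma : {set 'I_n}) : nat :=
  \max_(tau : {set 'I_n} | (tau \subset sigma) && col_indep H tau) #|tau|.

Definition N_ (m : nat) (H : 'M[F]_(m, n)) (i : nat) : {set {set 'I_n}} :=
  [set sigma : {set 'I_n} |
     minset (fun s : {set 'I_n} => #|s| - mrank H s == i)%N sigma].

End Codes.

(* The defect [#|s| - mrank H s] is the dimension of the subcode [C(s)] of the
   codewords of [C] supported in [s]: a maximal independent set [t] of columns in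
   [s] has [C(t) = 0], and each further column of [s] closes a circuit, i.e. a
   codeword of [C(s)], so the coordinate space of [s] is the sum of that of [t]
   and [C(s)].  Hence a minimal [s] of defect [i] is the support of the
   [i]-dimensional subcode [C(s)].  Conversely, the support of an [i]-dimensional
   subcode [D] is minimal of defect [i] provided [C(Supp D)], which contains [D],
   still has dimension [i].  This is where constant weight enters: counting the
   nonzero entries of the codewords of a dimension-[r] subcode with common weight
   [w] in two ways gives [|Supp D| q^(r-1) (q-1) = (q^r - 1) w], so two nested
   such subcodes with the same support have the same dimension. *)

From HB Require Import structures.
From mathcomp Require Import all_boot all_order all_algebra all_field.
From mathcomp Require Import zify.
Set Implicit Arguments. Unset Strict Implicit. Unset Printing Implicit Defensive.
Import GRing.Theory.

(* Cross-multiplying the two identities gives [q ^ a = q ^ b]. *)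
Lemma support_count_exp_inj (q S w a b : nat) : 1 < q -> 0 < w ->
  S * (q ^ a.+1 - q ^ a) = (q ^ a.+1 - 1) * w ->
  S * (q ^ b.+1 - q ^ b) = (q ^ b.+1 - 1) * w -> a = b.
Proof.
move=> q1 w0 ea eb; apply/eqP; rewrite -(eqn_exp2l _ _ q1); apply/eqP.
have := expn_gt0 q a; have := expn_gt0 q b; rewrite (ltnW q1) /=.
move: ea eb; rewrite !expnS; move: (q ^ a) (q ^ b) => X Y ea eb X0 Y0.
have cross : (q * X - 1) * w * Y = (q * Y - 1) * w * X.
  by rewrite -ea -eb; nia.
nia.
Qed.

Local Open Scope ring_scope.

Section CoordinateSpaces.
Variables (F : fieldType) (n : nat).

Definition coord_mx (s : {set 'I_n}) : 'M[F]_n := diag_mx (\row_j (j \in s)%:R).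

Lemma sub_coord_mxP (s : {set 'I_n}) (v : 'rV[F]_n) :
  reflect (forall j, j \notin s -> v 0 j = 0) (v <= coord_mx s)%MS.
Proof.
apply: (iffP idP) => [/submxP[w ->] j js | v0].
  by rewrite mul_mx_diag !mxE (negbTE js) mulr0.
suff ev : v = v *m coord_mx s by rewrite [X in (X <= _)%MS]ev submxMl.
apply/rowP => j; rewrite mul_mx_diag !mxE.
by case: (boolP (j \in s)) => js; rewrite ?mulr1 // v0 ?mul0r.
Qed.

Lemma coord_mxS (s t : {set 'I_n}) : s \subset t -> (coord_mx s <= coord_mx t)%MS.
Proof.
move=> st; apply/rV_subP => v /sub_coord_mxP v0; apply/sub_coord_mxP => j jt.
by apply: v0; apply: contra jt; apply: (subsetP st).
Qed.

Lemma coord_mx_sum_delta (s : {set 'I_n}) :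
  (coord_mx s :=: \sum_(j in s) <<delta_mx 0 j : 'rV[F]_n>>)%MS.
Proof.
apply/eqmxP/andP; split.
  apply/rV_subP => v /sub_coord_mxP v0; rewrite [v]row_sum_delta.
  apply: summx_sub => j _; case: (boolP (j \in s)) => js.
    by rewrite scalemx_sub // (sumsmx_sup j) ?genmxE.
  by rewrite v0 // scale0r sub0mx.
apply/sumsmx_subP => j js; rewrite genmxE; apply/sub_coord_mxP => k ks.
by rewrite mxE eqxx; case: eqP => // kj; rewrite kj js in ks.
Qed.

Lemma mxrank_coord_mx (s : {set 'I_n}) : \rank (coord_mx s) = #|s|.
Proof.
rewrite coord_mx_sum_delta (mxdirectP (mxdirect_delta _ (in2W (@inj_id _)))) /=.
by rewrite -sum1_card; apply: eq_bigr => j _; rewrite mxrank_gen mxrank_delta.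
Qed.

Lemma coord_mx_subP (s : {set 'I_n}) m (A : 'M[F]_(m, n)) :
  reflect (forall j, j \in s -> ((delta_mx 0 j : 'rV[F]_n) <= A)%MS)
          (coord_mx s <= A)%MS.
Proof.
rewrite coord_mx_sum_delta; apply: (iffP sumsmx_subP) => sA j /sA;
  by rewrite genmxE.
Qed.

End CoordinateSpaces.

Section Supports.
Variables (F : finFieldType) (n : nat).
Local Notation q := #|F|.

Lemma SuppP (D : 'M[F]_n) x :
  reflect (exists2 d : 'rV[F]_n, (d <= D)%MS & d 0 x != 0) (x \in Supp D).
Proof.
rewrite inE; apply: (iffP existsP) => [[d /andP[]] | [d dD dx]]; first by exists d.
by exists d; rewrite dD dx.
Qed.

Lemma sub_coord_mx_Supp (D : 'M[F]_n) (s : {set 'I_n}) :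
  (D <= coord_mx F s)%MS = (Supp D \subset s).
Proof.
apply/rV_subP/subsetP => [sDs x /SuppP[d /sDs /sub_coord_mxP d0 dx] | sDs d dD].
  by apply: contraR dx => xs; rewrite d0.
apply/sub_coord_mxP => j js; apply/eqP; apply: contraNT js => dj.
by apply: sDs; apply/SuppP; exists d.
Qed.

Lemma SuppS (D1 D2 : 'M[F]_n) : (D1 <= D2)%MS -> Supp D1 \subset Supp D2.
Proof.
move=> D12; apply/subsetP => x /SuppP[d dD1 dx].
by apply/SuppP; exists d => //; apply: submx_trans D12.
Qed.

Lemma Supp_eq0 (D : 'M[F]_n) : (Supp D == set0) = (D == 0).
Proof.
rewrite -subset0 -sub_coord_mx_Supp.
have -> : coord_mx F set0 = 0 :> 'M[F]_n.
  by apply/eqP; rewrite -mxrank_eq0 mxrank_coord_mx cards0.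
by rewrite submx0.
Qed.

Lemma card_rV_sub m (A : 'M[F]_(m, n)) :
  #|[set d : 'rV[F]_n | (d <= A)%MS]| = (q ^ \rank A)%N.
Proof.
have -> : [set d : 'rV[F]_n | (d <= A)%MS] = [set v *m row_base A | v in 'rV_(\rank A)].
  apply/setP => d; rewrite inE; apply/idP/imsetP.
    by rewrite -(eq_row_base A) => /submxP[v ->]; exists v.
  by case=> v _ ->; rewrite (submx_trans (submxMl _ _)) ?eq_row_base.
rewrite card_imset ?card_mx ?mul1n //.
have [B AB1] := row_freeP (row_base_free A).
by apply: (can_inj (g := mulmx^~ B)) => v; rewrite -mulmxA AB1 mulmx1.
Qed.

Lemma mxrank_cap_coord_setC1 (D : 'M[F]_n) x :
  x \in Supp D -> \rank (D :&: coord_mx F [set~ x])%MS = (\rank D).-1.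
Proof.
move=> xD; set Hx := coord_mx F [set~ x].
have rHx : \rank Hx = n.-1 by rewrite mxrank_coord_mx cardsC1 card_ord.
have /ltn_leqif ltHx := mxrank_leqif_sup (addsmxSr D Hx).
have DHx : ~~ (D + Hx <= Hx)%MS.
  rewrite addsmx_sub submx_refl andbT sub_coord_mx_Supp.
  by apply/negP => /subsetP/(_ x xD); rewrite !inE eqxx.
have := mxrank_sum_cap D Hx; have := rank_leq_col (D + Hx)%MS.
move: ltHx; rewrite DHx rHx; have := ltn_ord x; lia.
Qed.

Lemma card_rV_sub_nz (D : 'M[F]_n) x : x \in Supp D ->
  #|[set d : 'rV[F]_n | (d <= D)%MS && (d 0 x != 0)]| =
  (q ^ \rank D - q ^ (\rank D).-1)%N.
Proof.
move=> xD; set Hx := coord_mx F [set~ x].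
have -> : [set d : 'rV[F]_n | (d <= D)%MS && (d 0 x != 0)] =
          [set d | (d <= D)%MS] :\: [set d | (d <= D :&: Hx)%MS].
  apply/setP => d; rewrite !inE sub_capmx andbC; case: (d <= D)%MS; rewrite ?andbF //.
  rewrite !andbT; congr negb; apply/eqP/sub_coord_mxP => [dx j | d0]; last first.
    by apply: d0; rewrite !inE negbK.
  by rewrite !inE negbK => /eqP->.
rewrite cardsD (setIidPr _); last first.
  by apply/subsetP => d; rewrite !inE sub_capmx => /andP[].
by rewrite !card_rV_sub mxrank_cap_coord_setC1.
Qed.

Lemma sum_wt_Supp (D : 'M[F]_n) :
  (\sum_(d : 'rV[F]_n | (d <= D)%MS) wt d =
   #|Supp D| * (q ^ \rank D - q ^ (\rank D).-1))%N.
Proof.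
under eq_bigr => d _ do rewrite /wt -sum1_card big_mkcond.
rewrite exchange_big /= -sum_nat_const [RHS]big_mkcond /=; apply: eq_bigr => x _.
case: ifPn => [xD | xD].
  rewrite -(card_rV_sub_nz xD) -sum1_card [RHS]big_mkcond [LHS]big_mkcond /=.
  by apply: eq_bigr => d _; rewrite !inE; case: (d <= D)%MS.
rewrite big1 // => d dD; rewrite inE; case: eqP => // /eqP dx.
by case/SuppP: xD; exists d.
Qed.

Lemma sum_wt_const (D : 'M[F]_n) w :
  (forall d : 'rV[F]_n, (d <= D)%MS -> d != 0 -> wt d = w) ->
  (\sum_(d : 'rV[F]_n | (d <= D)%MS) wt d = (q ^ \rank D - 1) * w)%N.
Proof.
move=> wD; rewrite (bigD1 0) ?sub0mx //=.
have -> : wt (0 : 'rV[F]_n) = 0%N.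
  by apply/eqP; rewrite cards_eq0; apply/eqP/setP => x; rewrite !inE mxE eqxx.
rewrite add0n (eq_bigr (fun=> w)) => [|d /andP[]]; last exact: wD.
rewrite sum_nat_const -card_rV_sub (cardsD1 0) inE sub0mx add1n subn1 /=.
by congr (_ * _)%N; apply: eq_card => d; rewrite !inE andbC.
Qed.

Lemma constant_weight_card_Supp (D : 'M[F]_n) w :
  (forall d : 'rV[F]_n, (d <= D)%MS -> d != 0 -> wt d = w) ->
  (#|Supp D| * (q ^ \rank D - q ^ (\rank D).-1) = (q ^ \rank D - 1) * w)%N.
Proof. by move=> wD; rewrite -sum_wt_Supp (sum_wt_const wD). Qed.

Lemma wt_gt0 (d : 'rV[F]_n) : d != 0 -> (0 < wt d)%N.
Proof.
rewrite card_gt0; apply: contra_neqT => /negPn/eqP/setP d0.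
by apply/rowP => j; move: (d0 j); rewrite !inE mxE => /negbFE/eqP.
Qed.

Lemma constant_weight_rank (C D1 D2 : 'M[F]_n) : constant_weight C ->
  (D1 <= D2)%MS -> (D2 <= C)%MS -> Supp D1 = Supp D2 -> \rank D1 = \rank D2.
Proof.
move=> cwC D12 D2C SD12.
have [D10 | /rowV0Pn[d dD1 dnz]] := eqVneq D1 0.
  have /eqP D20 : D2 == 0 by rewrite -Supp_eq0 -SD12 Supp_eq0 D10.
  by rewrite D10 D20.
have wD (D : 'M[F]_n) : (D <= D2)%MS ->
    forall d' : 'rV[F]_n, (d' <= D)%MS -> d' != 0 -> wt d' = wt d.
  move=> DD2 d' d'D d'nz; apply: cwC => //; apply: submx_trans D2C.
    exact: submx_trans d'D DD2.
  exact: submx_trans dD1 D12.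
have r1 : (0 < \rank D1)%N by apply: leq_trans (mxrankS dD1); rewrite rank_rV dnz.
have r2 := leq_trans r1 (mxrankS D12).
have := constant_weight_card_Supp (wD _ D12).
have := constant_weight_card_Supp (wD _ (submx_refl D2)).
rewrite -SD12; case: (\rank D1) r1 => // a _; case: (\rank D2) r2 => // b _ /= e2 e1.
have q1 : (1 < q)%N by rewrite (cardD1 0) (cardD1 1) !inE oner_neq0.
by congr _.+1; apply: support_count_exp_inj q1 (wt_gt0 dnz) e1 e2.
Qed.

End Supports.

Section Subcodes.
Variables (F : finFieldType) (n : nat).

Definition subcode_on (C : 'M[F]_n) (s : {set 'I_n}) := (coord_mx F s :&: C)%MS.

Lemma Supp_subcode_on (C : 'M[F]_n) s : Supp (subcode_on C s) \subset s.
Proof. by rewrite -sub_coord_mx_Supp capmxSl. Qed.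

Lemma subcode_onS (C : 'M[F]_n) (s t : {set 'I_n}) :
  s \subset t -> (subcode_on C s <= subcode_on C t)%MS.
Proof. by move=> st; rewrite capmxS ?coord_mxS. Qed.

Lemma sub_subcode_on_Supp (C D : 'M[F]_n) :
  (D <= C)%MS -> (D <= subcode_on C (Supp D))%MS.
Proof. by move=> DC; rewrite sub_capmx DC sub_coord_mx_Supp subxx. Qed.

Lemma mxrank_subcode_on_le (C : 'M[F]_n) s : (\rank (subcode_on C s) <= #|s|)%N.
Proof. by rewrite -(mxrank_coord_mx F) mxrankS ?capmxSl. Qed.

Variables (m : nat) (H : 'M[F]_(m, n)) (C : 'M[F]_n).
Hypothesis HC : parity_check H C.

Lemma parity_checkE (a : 'rV[F]_n) : (H *m a^T == 0) = (a <= C)%MS.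
Proof. by rewrite HC -(inj_eq (@trmx_inj _ _ _)) trmx_mul trmxK trmx0. Qed.

Lemma col_indep_subcode_on (t : {set 'I_n}) : col_indep H t = (subcode_on C t == 0).
Proof.
apply/forallP/rowV0P => [indep v | t0 a].
  rewrite sub_capmx => /andP[/sub_coord_mxP v0 vC]; apply/eqP.
  have vt : [forall j, (j \notin t) ==> (v 0 j == 0)].
    by apply/forallP => j; apply/implyP => /v0->.
  by move: (indep v); rewrite vt parity_checkE vC.
apply/implyP => /forallP a0; rewrite parity_checkE; apply/implyP => aC; apply/eqP/t0.
by rewrite sub_capmx aC andbT; apply/sub_coord_mxP => j /(implyP (a0 j)) /eqP.
Qed.

Lemma card_indep_add_subcode (s t : {set 'I_n}) : t \subset s -> col_indep H t ->
  (#|t| + \rank (subcode_on C s) <= #|s|)%N.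
Proof.
move=> ts; rewrite col_indep_subcode_on => /eqP t0.
rewrite -!(mxrank_coord_mx F) -mxrank_sum_cap.
have -> : \rank (coord_mx F t :&: subcode_on C s)%MS = 0%N.
  by apply/eqP; rewrite mxrank_eq0 -submx0 -t0 capmxS ?capmxSr.
by rewrite addn0 mxrankS // addsmx_sub coord_mxS // capmxSl.
Qed.

Lemma delta_sub_dependent (t : {set 'I_n}) j :
  col_indep H t -> ~~ col_indep H (j |: t) ->
  ((delta_mx 0 j : 'rV[F]_n) <= coord_mx F t + subcode_on C (j |: t))%MS.
Proof.
move=> indt; rewrite col_indep_subcode_on => /rowV0Pn[c].
rewrite sub_capmx => /andP[cjt cC] cnz.
have cj : c 0 j != 0.
  apply: contra_neq cnz => cj0; move: indt; rewrite col_indep_subcode_on.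
  move/rowV0P; apply; rewrite sub_capmx cC andbT; apply/sub_coord_mxP => k kt.
  have [->//|kj] := eqVneq k j.
  by move/sub_coord_mxP: cjt; apply; rewrite !inE negb_or kj.
set c' := c - c 0 j *: delta_mx 0 j.
have c't : (c' <= coord_mx F t)%MS.
  apply/sub_coord_mxP => k kt; rewrite !mxE eqxx /=.
  case: eqP => [->|/eqP kj]; first by rewrite mulr1 subrr.
  by rewrite mulr0 subr0; apply/(sub_coord_mxP _ _ cjt); rewrite !inE negb_or kj.
have -> : delta_mx 0 j = (c 0 j)^-1 *: c - (c 0 j)^-1 *: c'.
  by rewrite -scalerBr /c' opprB addrC subrK scalerA mulVf ?scale1r.
rewrite addrC; apply: addmx_sub_adds; first by rewrite eqmx_opp scalemx_sub.
by rewrite scalemx_sub // sub_capmx cjt.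
Qed.

Lemma mrank_subcode_on (s : {set 'I_n}) : mrank H s = (#|s| - \rank (subcode_on C s))%N.
Proof.
apply/eqP; rewrite eqn_leq; apply/andP; split.
  apply/bigmax_leqP => t /andP[ts indt].
  by rewrite leq_subRL ?mxrank_subcode_on_le // addnC card_indep_add_subcode.
have P0 : (set0 \subset s) && col_indep H set0.
  by rewrite sub0set col_indep_subcode_on -mxrank_eq0 -leqn0 -(cards0 'I_n)
             mxrank_subcode_on_le.
have [t0 /andP[t0s ind0] maxt0] :=
  @arg_maxnP _ _ (fun t : {set 'I_n} => (t \subset s) && col_indep H t)
             (fun t => #|t|) P0.
have sK : (coord_mx F s <= coord_mx F t0 + subcode_on C s)%MS.
  apply/coord_mx_subP => j js; have [jt0 | jt0] := boolP (j \in t0).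
    apply: submx_trans (addsmxSl _ _).
    by move/coord_mx_subP: (submx_refl (coord_mx F t0)); apply.
  have dep : ~~ col_indep H (j |: t0).
    apply: contraL jt0 => indj; have := maxt0 (j |: t0).
    rewrite subUset sub1set js t0s indj cardsU1 negbK => /(_ isT).
    by case: (j \in t0) => //=; rewrite add1n ltnn.
  apply: submx_trans (delta_sub_dependent ind0 dep) _.
  by rewrite addsmxS ?subcode_onS // subUset sub1set js.
rewrite leq_subLR -{1}(mxrank_coord_mx F s); apply: leq_trans (mxrankS sK) _.
apply: leq_trans (mxrank_adds_leqif _ _).1 _.
by rewrite mxrank_coord_mx addnC leq_add2l; apply: leq_bigmax_cond; rewrite t0s.
Qed.

Lemma card_sub_mrank (s : {set 'I_n}) : (#|s| - mrank H s)%N = \rank (subcode_on C s).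
Proof. by rewrite mrank_subcode_on subKn ?mxrank_subcode_on_le. Qed.

End Subcodes.

Section MinimalSupports.
Variables (F : finFieldType) (n : nat) (C : 'M[F]_n).

Definition subcode_rank_eq (i : nat) (s : {set 'I_n}) := \rank (subcode_on C s) == i.

Lemma Supp_subcode_on_minset i (s : {set 'I_n}) :
  minset (subcode_rank_eq i) s -> Supp (subcode_on C s) = s.
Proof.
case/minsetP=> /eqP rs mins; apply: mins; last exact: Supp_subcode_on.
have KS : (subcode_on C s <= subcode_on C (Supp (subcode_on C s)))%MS.
  by rewrite sub_subcode_on_Supp ?capmxSr.
rewrite /subcode_rank_eq eqn_leq -{2}rs (mxrankS KS) -rs.
by rewrite mxrankS ?subcode_onS ?Supp_subcode_on.
Qed.

Lemma minset_Supp_subcode (D : 'M[F]_n) : constant_weight C -> (D <= C)%MS ->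
  minset (subcode_rank_eq (\rank D)) (Supp D).
Proof.
move=> cwC DC; set K := subcode_on C (Supp D).
have DK : (D <= K)%MS by rewrite sub_subcode_on_Supp.
have SDK : Supp D = Supp K by apply/eqP; rewrite eqEsubset SuppS ?Supp_subcode_on.
have rK : \rank K = \rank D by rewrite (constant_weight_rank cwC DK (capmxSr _ _) SDK).
apply/minsetP; split=> [|B /eqP rB BD]; first by rewrite /subcode_rank_eq rK.
have KB : (K <= subcode_on C B)%MS.
  have := mxrank_leqif_eq (subcode_onS C BD); rewrite -/K rB rK.
  by move/leqif_refl/andP=> [].
apply/eqP; rewrite eqEsubset BD; apply: subset_trans (Supp_subcode_on C B).
exact/SuppS/(submx_trans DK).
Qed.

End MinimalSupports.

Theorem proposition3 (F : finFieldType) (n m : nat) (C : 'M[F]_n)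
  (H : 'M[F]_(m, n)) (i : nat) :
  parity_check H C ->
  constant_weight C ->
  (i <= \rank C)%N ->
  N_ H i = [set Supp D | D in [pred D : 'M[F]_n | (D <= C)%MS && (\rank D == i)]].
Proof.
move=> HC cwC _; apply/setP => s; rewrite inE (minset_eq (P2 := subcode_rank_eq C i)).
  apply/idP/imsetP => [mins | [D /andP[DC /eqP <-] ->]].
    exists (subcode_on C s); last by rewrite (Supp_subcode_on_minset mins).
    by rewrite inE capmxSr; case/minsetP: mins.
  exact: minset_Supp_subcode.
by move=> t; rewrite /subcode_rank_eq /= (card_sub_mrank HC).
Qed.
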